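(* Let $d\ge2$ and fix $p_0<p_c(d)$. Let $a_n=n(e_1+\dots+e_d)\in\mathbb Z^d$ and suppose the edge weights $\tau_e$ are i.i.d. Bernoulli with values in $\{0,1\}$, $\mathbb P(\tau_e=0)=p$ and $p<p_0$. There exist a constant $C=C(d,p_0)>0$ and an index $N=N(d,p)\in\mathbb N$ such that for all $n\ge N$, $$C\,n\,p^{1/d}\ \le\ \mathbb E\big[\#\{e\in\pi^{(a_n)}:\tau_e=0\}\big].$$ Furthermore, there exists an index $N'=N'(d,p)$ such that for $n\ge N'$, $$C\,p^{1/d}\ \le\ \mathbb E\big[\nu_{a_n}(\{0\})\big].$$
   Context: $p_c(d)$ is the critical probability for Bernoulli bond percolation on $\mathbb Z^d$; $e_1,\dots,e_d$ are the standard basis vectors. Weights $\tau_e$ are attached to nearest-neighbor edges of $\mathbb Z^d$. $T(\gamma)=\sum_{e\in\gamma}\tau_e$; a geodesic from $0$ to $x$ is a vertex self-avoiding nearest-neighbor path minimizing $T$ among such paths. Fix a deterministic ordering of all finite vertex self-avoiding paths; $\pi^{(x)}$ is the first geodesic from $0$ to $x$ in this ordering. $\nu_x(B)=\frac{1}{|\pi^{(x)}|}\#\{e\in\pi^{(x)}:\tau_e\in B\}$, with $|\pi^{(x)}|$ the number of edges. *)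

From HB Require Import structures.
From mathcomp Require Import all_boot all_order all_algebra.
From mathcomp Require Import all_classical all_reals all_analysis.
Set Implicit Arguments. Unset Strict Implicit. Unset Printing Implicit Defensive.
Import Order.TTheory GRing.Theory Num.Theory.
Local Open Scope classical_set_scope.
Local Open Scope ring_scope.

Definition vtx (d : nat) := {ffun 'I_d -> int}.
Definition origin (d : nat) : vtx d := [ffun => 0%Z].
Definition shift (d : nat) (x : vtx d) (i : 'I_d) : vtx d :=
  [ffun j => x j + (j == i)%:Z].
Definition diag (d : nat) (n : nat) : vtx d := [ffun => n%:Z].

(* Nearest-neighbour edges of Z^d: the pair (x, i) denotes the edge {x, x + e_i}.
   This is a bijection with the set of nearest-neighbour edges. *)
Definition edge (d : nat) := (vtx d * 'I_d)%type.

Definition adj (d : nat) : rel (vtx d) :=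
  fun u v => [exists i, (v == shift u i) || (u == shift v i)].

Definition pair_edges (d : nat) (u v : vtx d) : seq (edge d) :=
  [seq (u, i) | i <- enum 'I_d & v == shift u i] ++
  [seq (v, i) | i <- enum 'I_d & u == shift v i].

Definition edges_of (d : nat) (g : seq (vtx d)) : seq (edge d) :=
  flatten [seq pair_edges uv.1 uv.2 | uv <- zip g (behead g)].

Definition sap (d : nat) (x y : vtx d) (g : seq (vtx d)) : Prop :=
  match g with
  | [::] => False
  | v :: s => [/\ v = x, path (@adj d) x s, last x s = y & uniq g]
  end.

Section FPP.
Variables (d : nat) (Omega : Type) (R : realType).
Variable tau : edge d -> Omega -> R.

Definition passage_time (w : Omega) (g : seq (vtx d)) : R :=
  \sum_(e <- edges_of g) tau e w.

Definition geodesic (w : Omega) (x : vtx d) (g : seq (vtx d)) : Prop :=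
  sap (origin d) x g /\
  forall g', sap (origin d) x g' -> passage_time w g <= passage_time w g'.

(* The ordering of finite paths is given by an injective rank function. *)
Variable rank : seq (vtx d) -> nat.

Definition first_geodesic (w : Omega) (x : vtx d) (g : seq (vtx d)) : Prop :=
  geodesic w x g /\ forall g', geodesic w x g' -> (rank g <= rank g')%N.

Definition pi_geo (w : Omega) (x : vtx d) : seq (vtx d) :=
  xget [::] (first_geodesic w x).

Definition nzero (w : Omega) (x : vtx d) : nat :=
  count (fun e => tau e w == 0) (edges_of (pi_geo w x)).

Definition glen (w : Omega) (x : vtx d) : nat := size (edges_of (pi_geo w x)).

Definition nu0 (w : Omega) (x : vtx d) : R := (nzero w x)%:R / (glen w x)%:R.
End FPP.

Definition mutually_independent (d0 : measure_display) (Omega : measurableType d0)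
  (R : realType) (P : probability Omega R) (I : eqType) (X : I -> Omega -> R) : Prop :=
  forall (s : seq I) (B : I -> set R), uniq s -> (forall i, measurable (B i)) ->
  P (\bigcap_(i in [set` s]) (X i @^-1` B i)) = (\prod_(i <- s) P (X i @^-1` B i))%E.

Definition iid_bernoulli (d0 : measure_display) (Omega : measurableType d0)
  (R : realType) (P : probability Omega R) (I : eqType) (X : I -> Omega -> R)
  (p : R) : Prop :=
  [/\ forall i, measurable_fun setT (X i),
      mutually_independent P X &
      forall i, P (X i @^-1` [set 0]) = p%:E /\ P (X i @^-1` [set 1]) = (1 - p)%:E].

(* Bernoulli bond percolation: edge e is open iff X e w = 1 (probability q). *)
Definition open_cluster (d : nat) (Omega : Type) (R : realType)
  (X : edge d -> Omega -> R) (w : Omega) : set (vtx d) :=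
  [set x | exists s, [/\ path (@adj d) (origin d) s, last (origin d) s = x &
                        all (fun e => X e w == 1) (edges_of (origin d :: s))]].

Definition no_percolation (R : realType) (d : nat) (q : R) : Prop :=
  forall (d0 : measure_display) (Omega : measurableType d0)
         (P : probability Omega R) (X : edge d -> Omega -> R),
  iid_bernoulli P X (1 - q) ->
  P [set w | ~ finite_set (open_cluster X w)] = 0%E.

Definition p_c (R : realType) (d : nat) : R :=
  sup [set q : R | 0 <= q <= 1 /\ no_percolation d q].

From Pilot Require Import Defs.
From HB Require Import structures.
From mathcomp Require Import all_boot all_order all_algebra.
From mathcomp Require Import all_classical all_reals all_analysis.
From mathcomp Require Import measurable_realfun.
From mathcomp Require Import zify ring lra.
Import Order.TTheory GRing.Theory Num.Theory.
Local Open Scope classical_set_scope.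
Local Open Scope ring_scope.
Set Implicit Arguments. Unset Strict Implicit. Unset Printing Implicit Defensive.

(* Cut the diagonal from 0 to a_n into n/k cubes of side k = floor(p^(-1/d)) + 1.
   Each cube holds at least 1/p edges, so it contains an edge of weight 0 with
   probability at least 1/2. Weights are a.s. in {0,1}, so T(g) counts the
   weight-1 edges of g. A monotone path of dn edges through the cubes can pick up
   one zero edge in every cube that has one; the geodesic pi has at least dn
   edges but no more weight-1 edges than this path, hence at least as many zero
   edges as there are such cubes, and |pi| <= #zeros(pi) + dn. *)

(* MathComp-Analysis also exports a [shift]. *)
Local Notation shift := Defs.shift.

Section Lattice.
Variable d : nat.
Implicit Types (x y u v : vtx d) (s : seq 'I_d).

Definition coord_sum x : int := \sum_(j < d) x j.

Lemma coord_sum_shift x i : coord_sum (shift x i) = coord_sum x + 1.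
Proof.
rewrite /coord_sum; under eq_bigr do rewrite ffunE.
rewrite big_split /=; congr (_ + _).
by rewrite (bigD1 i) //= eqxx big1 ?addr0 // => j /negbTE ->.
Qed.

Lemma coord_sum_diag n : coord_sum (diag d n) = (d * n)%N.
Proof.
rewrite /coord_sum; under eq_bigr do rewrite ffunE.
by rewrite sumr_const card_ord -mulr_natr -natz -natrM mulnC natz.
Qed.

Lemma origin_diag0 : origin d = diag d 0.
Proof. by []. Qed.

Lemma shift_inj x : injective (shift x).
Proof.
move=> i j /ffunP/(_ i); rewrite !ffunE eqxx => /addrI.
by case: eqP.
Qed.

Lemma shift_neq x i : (x == shift x i) = false.
Proof. by apply/negbTE/eqP => /(congr1 coord_sum); rewrite coord_sum_shift; lia. Qed.

Lemma shift2_neq x i j : (x == shift (shift x i) j) = false.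
Proof. by apply/negbTE/eqP => /(congr1 coord_sum); rewrite !coord_sum_shift; lia. Qed.

Lemma adj_coord_sum u v : adj u v -> coord_sum v <= coord_sum u + 1.
Proof. by case/existsP => i /orP [] /eqP ->; rewrite coord_sum_shift; lia. Qed.

Lemma pair_edges_shift x i : pair_edges x (shift x i) = [:: (x, i)].
Proof.
rewrite /pair_edges (eq_filter (a2 := pred1 i)); last first.
  by move=> j /=; rewrite (inj_eq (@shift_inj x)) eq_sym.
rewrite filter_pred1_uniq ?enum_uniq ?mem_enum //.
by rewrite (eq_filter (a2 := pred0)) ?filter_pred0 // => j; rewrite shift2_neq.
Qed.

Lemma size_pair_edges u v : adj u v -> size (pair_edges u v) = 1%N.
Proof.
case/existsP => i /orP [] /eqP ->; first by rewrite pair_edges_shift.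
rewrite /pair_edges size_cat !size_map (eq_filter (a2 := pred0)); last first.
  by move=> j; rewrite shift2_neq.
rewrite filter_pred0 (eq_filter (a2 := pred1 i)); last first.
  by move=> j /=; rewrite (inj_eq (@shift_inj v)) eq_sym.
by rewrite filter_pred1_uniq ?enum_uniq ?mem_enum.
Qed.

Lemma size_edges_path x g : path (@adj d) x g -> size (edges_of (x :: g)) = size g.
Proof.
elim: g x => [//|y g IH] x /= /andP [axy pg].
by rewrite /edges_of /= size_cat size_pair_edges // -/(edges_of _) IH.
Qed.

Lemma coord_sum_last x g :
  path (@adj d) x g -> coord_sum (last x g) <= coord_sum x + (size g)%:Z.
Proof.
elim: g x => [|y g IH] x /=; first by rewrite addr0.
by case/andP => /adj_coord_sum + /IH; lia.
Qed.

Lemma size_path_diag g n :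
  path (@adj d) (origin d) g -> last (origin d) g = diag d n -> (d * n <= size g)%N.
Proof.
move=> pg lg; have := coord_sum_last pg.
by rewrite lg coord_sum_diag origin_diag0 coord_sum_diag muln0 add0r lez_nat.
Qed.

Fixpoint walk x s : seq (vtx d) :=
  if s is i :: s' then shift x i :: walk (shift x i) s' else [::].

Fixpoint walk_edges x s : seq (edge d) :=
  if s is i :: s' then (x, i) :: walk_edges (shift x i) s' else [::].

Definition walk_end x s := last x (walk x s).

Lemma walk_endE x s : walk_end x s = [ffun j => x j + (count_mem j s)%:Z].
Proof.
rewrite /walk_end; elim: s x => [|i s IH] x /=.
  by apply/ffunP => j; rewrite ffunE addr0.
rewrite IH; apply/ffunP => j; rewrite !ffunE -addrA; congr (_ + _).
by rewrite eq_sym PoszD addrC.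
Qed.

Lemma coord_sum_walk_end x s : coord_sum (walk_end x s) = coord_sum x + (size s)%:Z.
Proof.
rewrite /walk_end; elim: s x => [|i s IH] x /=; first by rewrite addr0.
by rewrite IH coord_sum_shift; lia.
Qed.

Lemma walk_end_cat x s1 s2 : walk_end x (s1 ++ s2) = walk_end (walk_end x s1) s2.
Proof. by rewrite !walk_endE; apply/ffunP => j; rewrite !ffunE count_cat PoszD addrA. Qed.

Lemma walk_edges_cat x s1 s2 :
  walk_edges x (s1 ++ s2) = walk_edges x s1 ++ walk_edges (walk_end x s1) s2.
Proof. by elim: s1 x => [|i s1 IH] x //=; rewrite IH. Qed.

Lemma edges_of_walk x s : edges_of (x :: walk x s) = walk_edges x s.
Proof.
elim: s x => [//|i s IH] x.
by rewrite /edges_of /= pair_edges_shift -/(edges_of _) IH.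
Qed.

Lemma size_walk_edges x s : size (walk_edges x s) = size s.
Proof. by elim: s x => [//|i s IH] x /=; rewrite IH. Qed.

Lemma walk_path x s : path (@adj d) x (walk x s).
Proof.
elim: s x => [//|i s IH] x /=; rewrite IH andbT.
by apply/existsP; exists i; rewrite eqxx.
Qed.

Lemma coord_sum_walk x s y : y \in walk x s -> coord_sum x < coord_sum y.
Proof.
elim: s x => [//|i s IH] x /=; rewrite inE => /orP [/eqP ->|/IH].
  by rewrite coord_sum_shift ltrDl.
by rewrite coord_sum_shift; lia.
Qed.

Lemma walk_uniq x s : uniq (x :: walk x s).
Proof.
elim: s x => [//|i s IH] x; rewrite [walk _ _]/= cons_uniq IH andbT inE negb_or.
rewrite shift_neq /=; apply/negP => /coord_sum_walk.
by rewrite coord_sum_shift; lia.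
Qed.

Lemma walk_sap s n :
  walk_end (origin d) s = diag d n -> sap (origin d) (diag d n) (origin d :: walk (origin d) s).
Proof. by move=> en; split => //; [exact: walk_path | exact: walk_uniq]. Qed.

End Lattice.

Section Boxes.
Variables d k : nat.

Definition steps (f : 'I_d -> nat) : seq 'I_d :=
  flatten [seq nseq (f j) j | j <- enum 'I_d].

Lemma count_steps f j : count_mem j (steps f) = f j.
Proof.
rewrite /steps count_flatten -map_comp.
rewrite (eq_map (g := fun i => ((i == j) * f i)%N)); last first.
  by move=> i /=; rewrite count_nseq /= mulnC eq_sym.
by rewrite sumnE big_map big_enum (bigD1 j) //= eqxx mul1n big1 ?addn0 // => i /negbTE ->.
Qed.

Local Notation box_slot := ({ffun 'I_d -> 'I_k} * 'I_d)%type.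

Definition box_edge (b : nat) (y : box_slot) : edge d :=
  ([ffun j => (b * k + y.1 j)%N%:Z], y.2).

Lemma box_edge_inj b : injective (box_edge b).
Proof.
move=> [y i] [y' i'] [/ffunP eq_y ->]; congr (_, _); apply/ffunP => j.
by have := eq_y j; rewrite !ffunE => -[] /addnI /val_inj.
Qed.

Definition box_edges b := [seq box_edge b y | y <- enum {: box_slot}].

Lemma box_edges_uniq b : uniq (box_edges b).
Proof. by rewrite map_inj_uniq ?enum_uniq //; exact: box_edge_inj. Qed.

Lemma size_box_edges b : size (box_edges b) = (k ^ d * d)%N.
Proof. by rewrite size_map -cardE card_prod card_ffun !card_ord. Qed.

Variable Q : pred (edge d).

(* From the corner a_(bk) to the tail of some [Q]-edge of box [b] (if any),
   across it, and on to the corner a_((b+1)k). *)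
Definition box_word b : seq 'I_d :=
  if [pick y | Q (box_edge b y)] is Some y then
    steps (fun j => y.1 j) ++ y.2 :: steps (fun j => k - y.1 j - (j == y.2))%N
  else steps (fun _ => k).

Lemma count_box_word b j : count_mem j (box_word b) = k.
Proof.
rewrite /box_word; case: pickP => [[y i] _|_]; last by rewrite count_steps.
rewrite count_cat /= !count_steps; have := ltn_ord (y j).
by case: (eqVneq j i) => [->|_] /=; lia.
Qed.

Lemma box_word_hits b :
  has Q (box_edges b) -> has Q (walk_edges (diag d (b * k)) (box_word b)).
Proof.
case/hasP => _ /mapP [y0 _ ->] Qy0; rewrite /box_word.
case: pickP => [[y i] Qy|/(_ y0)/negbT/negP //].
apply/hasP; exists (box_edge b (y, i)) => //.
rewrite walk_edges_cat mem_cat /= inE walk_endE; apply/orP; right; apply/orP; left.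
by apply/eqP; congr (_, _); apply/ffunP => j; rewrite !ffunE count_steps PoszD.
Qed.

Definition boxes_word m := flatten [seq box_word b | b <- iota 0 m].

Lemma boxes_wordS m : boxes_word m.+1 = boxes_word m ++ box_word m.
Proof. by rewrite /boxes_word -addn1 iotaD map_cat flatten_cat /= cats0. Qed.

Lemma walk_end_boxes_word m : walk_end (origin d) (boxes_word m) = diag d (m * k).
Proof.
rewrite walk_endE; apply/ffunP => j; rewrite !ffunE add0r; congr Posz.
elim: m => [//|m IH]; rewrite boxes_wordS count_cat IH count_box_word; lia.
Qed.

Lemma count_has_box_le_boxes_word m :
  (count (fun b => has Q (box_edges b)) (iota 0 m)
     <= count Q (walk_edges (origin d) (boxes_word m)))%N.
Proof.
elim: m => [//|m IH].
rewrite boxes_wordS walk_edges_cat count_cat -addn1 iotaD count_cat /= add0n addn0.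
rewrite leq_add // walk_end_boxes_word.
by case: (boolP (has Q _)) => // /box_word_hits; rewrite has_count.
Qed.

Definition diag_word n m := boxes_word m ++ steps (fun _ => n - m * k)%N.

Lemma walk_end_diag_word n m :
  (m * k <= n)%N -> walk_end (origin d) (diag_word n m) = diag d n.
Proof.
move=> mkn; rewrite walk_end_cat walk_end_boxes_word walk_endE.
by apply/ffunP => j; rewrite !ffunE count_steps -PoszD subnKC.
Qed.

Lemma count_has_box_le_diag_word n m :
  (count (fun b => has Q (box_edges b)) (iota 0 m)
     <= count Q (walk_edges (origin d) (diag_word n m)))%N.
Proof.
rewrite walk_edges_cat count_cat.
exact: leq_trans (count_has_box_le_boxes_word m) (leq_addr _ _).
Qed.

End Boxes.

Lemma ex_minimizer (T : Type) (P : T -> Prop) (f : T -> nat) :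
  (exists x, P x) -> exists x, P x /\ forall y, P y -> (f x <= f y)%N.
Proof.
move=> [x0 Px0].
have exm : exists m, `[< exists x, P x /\ f x = m >].
  by exists (f x0); apply/asboolP; exists x0.
case: (ex_minnP exm) => m /asboolP [x [Px <-]] minm.
by exists x; split => // y Py; apply: minm; apply/asboolP; exists y.
Qed.

Section ZeroOneEnvironment.
Variables (d : nat) (Omega : Type) (R : realType) (tau : edge d -> Omega -> R).
Variables (rank : seq (vtx d) -> nat) (w : Omega).
Hypothesis tau01 : forall e, tau e w = 0 \/ tau e w = 1.

Local Notation is_zero := (fun e => tau e w == 0).
Local Notation is_one := (fun e => tau e w == 1).

Lemma passage_time_count_one g : passage_time tau w g = (count is_one (edges_of g))%:R.
Proof.
rewrite /passage_time; elim: (edges_of g) => [|e s IH]; first by rewrite big_nil.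
rewrite big_cons IH /=; case: (tau01 e) => ->; last by rewrite eqxx natrD addrC.
by rewrite add0r eq_sym oner_eq0.
Qed.

Lemma count_zero_one (s : seq (edge d)) : (count is_zero s + count is_one s)%N = size s.
Proof.
elim: s => [//|e s IH] /=; case: (tau01 e) => ->; rewrite eqxx ?oner_eq0 /=.
  by rewrite eq_sym oner_eq0 -IH; lia.
by rewrite -IH; lia.
Qed.

Lemma first_geodesic_pi_geo x g :
  sap (origin d) x g -> first_geodesic tau rank w x (pi_geo tau rank w x).
Proof.
move=> sap_g; apply: xgetPex.
have [g1 [sap_g1 min_g1]] := ex_minimizer (fun g => count is_one (edges_of g))
  (ex_intro (sap (origin d) x) g sap_g).
have geo_g1 : geodesic tau w x g1.
  by split => // g' /min_g1; rewrite !passage_time_count_one ler_nat.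
have [g2 [geo_g2 min_g2]] := ex_minimizer rank (ex_intro _ g1 geo_g1).
by exists g2.
Qed.

Lemma pi_geo_diag_bounds n s : walk_end (origin d) s = diag d n ->
  let pi := edges_of (pi_geo tau rank w (diag d n)) in
  [/\ (count is_zero (walk_edges (origin d) s) <= count is_zero pi)%N,
      (d * n <= size pi)%N & (size pi <= count is_zero pi + d * n)%N].
Proof.
move=> end_s pi.
have sap_s := walk_sap end_s.
have [[sap_pi geo_pi] _] := first_geodesic_pi_geo sap_s.
have := geo_pi _ sap_s; rewrite !passage_time_count_one edges_of_walk ler_nat.
have size_s : size s = (d * n)%N.
  have := coord_sum_walk_end (origin d) s.
  by rewrite end_s origin_diag0 !coord_sum_diag muln0 add0r => -[].
have := count_zero_one (walk_edges (origin d) s); rewrite size_walk_edges size_s.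
rewrite /pi; move: sap_pi; case: pi_geo => [//|v g] [-> path_g last_g _].
have := count_zero_one (edges_of (origin d :: g)).
have := size_path_diag path_g last_g.
rewrite size_edges_path //; split; lia.
Qed.

End ZeroOneEnvironment.

(* The library's [ge0_le_integral] needs measurability, which is not known
   for [nzero] and [nu0]. *)
Lemma ge0_le_integral_nonmeasurable (d0 : measure_display) (T : measurableType d0)
    (R : realType) (mu : {measure set T -> \bar R}) (f1 f2 : T -> \bar R) :
  (forall x, 0 <= f1 x)%E -> (forall x, f1 x <= f2 x)%E ->
  (\int[mu]_x f1 x <= \int[mu]_x f2 x)%E.
Proof.
move=> f1_ge0 f12.
have f2_ge0 x : (0 <= f2 x)%E by apply: le_trans (f12 x).
rewrite !ge0_integralE //; apply: ereal_sup_le => _ [h hf1 <-].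
by exists h => //= x; apply: le_trans (hf1 x) _; rewrite /patch /=; case: ifP.
Qed.

Lemma measurable_preimageT (d0 : measure_display) (T : measurableType d0) (R : realType)
    (f : T -> R) (B : set R) :
  measurable_fun setT f -> measurable B -> measurable (f @^-1` B).
Proof. by move=> mf mB; rewrite -[_ @^-1` _]setTI; exact: mf. Qed.

Section IidBernoulli.
Variables (d0 : measure_display) (Omega : measurableType d0) (R : realType).
Variables (P : probability Omega R) (I : eqType) (X : I -> Omega -> R) (p : R).
Hypothesis iid : iid_bernoulli P X p.

Let measurable_preimage i (B : set R) : measurable B -> measurable (X i @^-1` B).
Proof. by case: iid => mX _ _; exact: measurable_preimageT. Qed.

Lemma iid_bernoulli_range (i : I) : 0 <= p <= 1.
Proof.
case: iid => _ _ /(_ i) [P0 _].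
have m0 := measurable_preimage i (measurable_set1 0).
by rewrite -!lee_fin -P0 measure_ge0 probability_le1.
Qed.

Lemma measurable_has_zero (s : seq I) : measurable [set w | has (fun i => X i w == 0) s].
Proof.
elim: s => [|i s IH].
  suff -> : [set w | has (fun i => X i w == 0) [::]] = set0 by [].
  by apply/seteqP; split => w //=.
rewrite (_ : [set w | _] = X i @^-1` [set 0] `|` [set w | has (fun i => X i w == 0) s]).
  exact: measurableU (measurable_preimage i (measurable_set1 0)) IH.
apply/seteqP; split => w /=; first by case/orP => [/eqP|]; [left|right].
by case=> [->|->]; rewrite ?eqxx ?orbT.
Qed.

Lemma iid_bernoulli_has_zero (s : seq I) : uniq s ->
  P [set w | has (fun i => X i w == 0) s] = (1 - (1 - p) ^+ size s)%:E.
Proof.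
move=> uniq_s; have mA := measurable_has_zero s.
case: iid => _ indep law; set A := [set w | _] in mA *.
rewrite -[A]setCK probability_setC; last exact: measurableC.
have -> : ~` A = \bigcap_(i in [set` s]) X i @^-1` (~` [set 0]).
  apply/seteqP; split => w /=.
    by move=> Aw i si /= Xi0; apply: Aw; apply/hasP; exists i => //; apply/eqP.
  by move=> all_nz /hasP [i si /eqP]; exact: all_nz.
rewrite indep //; last by move=> i; exact: measurableC (measurable_set1 _).
have P_nonzero i : P (X i @^-1` (~` [set 0])) = (1 - p)%:E.
  rewrite -preimage_setC probability_setC ?(proj1 (law i)) //.
  exact: measurable_preimage (measurable_set1 0).
under eq_bigr do rewrite P_nonzero.
by rewrite prodEFin big_const_seq count_predT iter_mulr_1 -EFinB.
Qed.

End IidBernoulli.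

Lemma iid_bernoulli_ae01 (d0 : measure_display) (Omega : measurableType d0) (R : realType)
    (P : probability Omega R) (I : countType) (X : I -> Omega -> R) (p : R) :
  iid_bernoulli P X p -> {ae P, forall w, forall i, X i w = 0 \/ X i w = 1}.
Proof.
case=> mX _ law.
have mpre i (B : set R) : measurable B -> measurable (X i @^-1` B).
  exact: measurable_preimageT.
pose bad i := X i @^-1` (~` ([set 0] `|` [set 1])).
have m01 : measurable ([set 0] `|` [set 1] : set R).
  exact: measurableU (measurable_set1 _) (measurable_set1 _).
have P_bad i : P (bad i) = 0%E.
  rewrite /bad -preimage_setC probability_setC; last exact: mpre m01.
  rewrite preimage_setU measureU; first last.
  - by apply/seteqP; split => w //= [-> /esym/eqP]; rewrite oner_eq0.
  - exact: mpre (measurable_set1 _).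
  - exact: mpre (measurable_set1 _).
  have [P0 P1] := law i.
  transitivity (1 - (p%:E + (1 - p)%:E))%E; first by congr (_ - (_ + _))%E.
  by rewrite -EFinD addrC subrK subrr.
pose F m := if unpickle m is Some i then bad i else set0.
apply: (@negligibleS _ _ _ _ (\bigcup_m F m)).
  move=> w /= /existsNP [i not01]; exists (pickle i) => //.
  by rewrite /F pickleK.
apply: negligible_bigcup => m; rewrite /F; case: unpickle => [i|].
  by exists (bad i); split; [exact: mpre (measurableC m01) | exact: P_bad |].
exact: negligible_set0.
Qed.

Lemma integral_ge_count_events (d0 : measure_display) (Omega : measurableType d0)
    (R : realType) (P : probability Omega R) (A : nat -> set Omega) (m : nat)
    (c a : R) (f : Omega -> \bar R) :
  (forall b, measurable (A b)) -> (forall b, c%:E <= P (A b))%E -> 0 <= a ->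
  (forall w, 0 <= f w)%E ->
  {ae P, forall w, ((count (fun b => w \in A b) (iota 0 m))%:R * a)%:E <= f w}%E ->
  ((m%:R * c * a)%:E <= \int[P]_w f w)%E.
Proof.
move=> mA PA a_ge0 f_ge0 [N [mN PN0 subN]].
have mAN b : measurable (A b `\` N) by exact: measurableD.
have PAN b : P (A b `\` N) = P (A b).
  rewrite [RHS](measureDI P (mA b) mN) [X in _ = (_ + X)%E](_ : _ = 0%E) ?adde0 //.
  apply/eqP; rewrite -measure_le0 -PN0 le_measure ?inE //; exact: measurableI.
pose g w := (\sum_(b <- iota 0 m) (a%:E * (\1_(A b `\` N) w)%:E))%E.
apply: (@le_trans _ _ (\int[P]_w g w)%E).
  rewrite ge0_integral_sum //; first last.
  - by move=> b w _; rewrite -EFinM lee_fin mulr_ge0.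
  - by move=> b; apply/measurable_funeM/measurable_EFinP/measurable_indic.
  have int_b b : (\int[P]_w (a%:E * (\1_(A b `\` N) w)%:E) = a%:E * P (A b))%E.
    rewrite ge0_integralZl_EFin //; last by apply/measurable_EFinP; exact: measurable_indic.
    by rewrite integral_indic // setIT; congr (_ * _)%E; exact: PAN.
  under eq_bigr do rewrite int_b.
  rewrite (_ : (m%:R * c * a)%:E = \sum_(b <- iota 0 m) (a%:E * c%:E))%E; last first.
    rewrite sumEFin big_const_seq count_predT size_iota iter_addr_0 -mulr_natr.
    by congr EFin; ring.
  by apply: lee_sum => b _; apply: lee_wpmul2l; rewrite ?lee_fin.
apply: ge0_le_integral_nonmeasurable => w.
  by apply: sume_ge0 => b _; rewrite -EFinM lee_fin mulr_ge0.
rewrite /g sumEFin -mulr_sumr.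
have [Nw|Nw] := pselect (N w).
  by rewrite big1 ?mulr0 // => b _; rewrite indicE memNset // => -[].
have le_fw : (((count (fun b => w \in A b) (iota 0 m))%:R * a)%:E <= f w)%E.
  by apply: contrapT => not_le; exact: Nw (subN w not_le).
rewrite (eq_bigr (fun b => (w \in A b : nat)%:R)); last first.
  by move=> b _; rewrite indicE in_setD (memNset Nw) andbT.
by rewrite -sum1_count big_mkcond natr_sum mulrC in le_fw.
Qed.

Lemma onem_expn_le_half (R : realType) (p : R) (M : nat) :
  0 <= p <= 1 -> 1 <= M%:R * p -> (1 - p) ^+ M <= 2^-1.
Proof.
case/andP => p_ge0 p_le1 Mp_ge1.
have onem_le_expR : 1 - p <= expR (- p) by exact: expR_ge1Dx.
apply: (le_trans (lerXn2r M _ _ onem_le_expR)); rewrite ?nnegrE ?subr_ge0 ?expR_ge0 //.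
rewrite -expRM_natl (le_trans (_ : _ <= expR (- 1))) //.
  by rewrite ler_expR mulrN lerN2.
rewrite expRN lef_pV2 ?posrE ?expR_gt0 //.
by have := expR_ge1Dx (1 : R); rewrite (_ : 1 + 1 = 2 :> R) //; lra.
Qed.

Section ExpectedZeroEdges.
Variables (d : nat) (d0 : measure_display) (Omega : measurableType d0) (R : realType).
Variables (P : probability Omega R) (tau : edge d -> Omega -> R).
Variables (rank : seq (vtx d) -> nat) (p : R) (k : nat).
Hypothesis iid : iid_bernoulli P tau p.
Hypothesis d_gt0 : (0 < d)%N.
Hypothesis box_mass : 1 <= (k ^ d * d)%N%:R * p.

Local Notation zero_box b := [set w | has (fun e => tau e w == 0) (box_edges d k b)].

Lemma zero_box_ge_half b : ((2^-1)%:E <= P (zero_box b))%E.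
Proof.
rewrite (iid_bernoulli_has_zero iid) ?box_edges_uniq // size_box_edges lee_fin.
have := onem_expn_le_half (iid_bernoulli_range iid (origin d, Ordinal d_gt0)) box_mass.
by lra.
Qed.

Lemma count_zero_boxes_le w n : (forall e, tau e w = 0 \/ tau e w = 1) ->
  let Z := count (fun b => w \in zero_box b) (iota 0 (n %/ k)) in
  (Z <= nzero tau rank w (diag d n))%N /\ Z%:R / (d.+1 * n)%N%:R <= nu0 tau rank w (diag d n).
Proof.
move=> tau01 Z.
set Q := fun e => tau e w == 0.
have end_W := walk_end_diag_word Q (leq_divM n k).
have [le_zero_nzero le_dn_glen le_glen] := pi_geo_diag_bounds rank tau01 end_W.
have le_Z_nzero : (Z <= nzero tau rank w (diag d n))%N.
  apply: leq_trans le_zero_nzero; rewrite /Z (eq_count (a2 := fun b => has Q (box_edges d k b))).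
    exact: count_has_box_le_diag_word.
  by move=> b; apply/idP/idP => [/set_mem|/mem_set].
have le_Z_n : (Z <= n)%N.
  by apply: leq_trans (count_size _ _) _; rewrite size_iota leq_div.
split => //; have [->|n_gt0] := posnP n.
  by rewrite muln0 invr0 mulr0 /nu0 divr_ge0.
have glen_gt0 : (0 < glen tau rank w (diag d n))%N.
  by apply: leq_trans le_dn_glen; rewrite muln_gt0 d_gt0.
rewrite /nu0 ler_pdivrMr ?ltr0n ?muln_gt0 // mulrAC ler_pdivlMr ?ltr0n //.
rewrite -!natrM ler_nat; rewrite /glen /nzero in le_Z_nzero le_glen *; nia.
Qed.

Lemma expected_nzero_ge n :
  (((n %/ k)%:R / 2)%:E <= \int[P]_w ((nzero tau rank w (diag d n))%:R)%:E)%E.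
Proof.
rewrite -[_ / 2]mulr1; apply: (integral_ge_count_events (A := fun b => zero_box b)) => //.
- by move=> b; exact: measurable_has_zero iid _.
- exact: zero_box_ge_half.
apply: filterS (iid_bernoulli_ae01 iid) => w tau01.
by rewrite mulr1 lee_fin ler_nat; case: (count_zero_boxes_le n tau01).
Qed.

Lemma expected_nu0_ge n :
  (((n %/ k)%:R / 2 / (d.+1 * n)%N%:R)%:E <= \int[P]_w (nu0 tau rank w (diag d n))%:E)%E.
Proof.
apply: (integral_ge_count_events (A := fun b => zero_box b)) => //.
- by move=> b; exact: measurable_has_zero iid _.
- exact: zero_box_ge_half.
- by move=> w; rewrite lee_fin /nu0 divr_ge0.
apply: filterS (iid_bernoulli_ae01 iid) => w tau01.
by rewrite lee_fin; case: (count_zero_boxes_le n tau01).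
Qed.

End ExpectedZeroEdges.

Lemma box_side_exists (R : archiRealFieldType) (q : R) :
  0 < q -> q <= 1 -> exists k : nat, 1 <= k%:R * q <= 2.
Proof.
move=> q_gt0 q_le1; exists (Num.truncn q^-1).+1.
rewrite -ler_pdivrMr // mul1r (ltW (truncnS_gt _)) /=.
have trunc_q : (Num.truncn q^-1)%:R * q <= 1.
  by rewrite -ler_pdivlMr // div1r truncn_le invr_ge0 ltW.
by rewrite -natr1 mulrDl mul1r; lra.
Qed.

Lemma boxes_lower_bound (R : realFieldType) (q : R) (k n : nat) :
  1 <= k%:R * q <= 2 -> 4 <= n%:R * q -> n%:R * q / 8 <= (n %/ k)%:R / 2.
Proof.
case/andP => kq_ge1 kq_le2 nq_ge4.
have k_gt0 : (0 < k)%N.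
  by rewrite lt0n; apply: contraTneq kq_ge1 => ->; rewrite mul0r ler10.
have q_gt0 : 0 < q by have : 0 <= k%:R :> R by []; nra.
have n_lt : (n < (n %/ k).+1 * k)%N := ltn_ceil n k_gt0.
have nq_le : n%:R * q <= (n %/ k).+1%:R * (k%:R * q).
  by rewrite mulrA -natrM; apply: ler_wpM2r; [exact: ltW | rewrite ler_nat ltnW].
have : (n %/ k).+1%:R * (k%:R * q) <= (n %/ k).+1%:R * 2 by rewrite ler_wpM2l.
rewrite -natr1; lra.
Qed.

Lemma powR_invn_expn (R : realType) (p : R) (d : nat) :
  0 <= p -> (0 < d)%N -> (p `^ d%:R^-1) ^+ d = p.
Proof.
move=> p_ge0 d_gt0.
by rewrite -powR_mulrn ?powR_ge0 // -powRrM mulVf ?powRr1 // pnatr_eq0 -lt0n.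
Qed.

Lemma box_mass_ge1 (R : realFieldType) (q : R) (k d : nat) :
  (0 < d)%N -> 1 <= k%:R * q -> 1 <= (k ^ d * d)%N%:R * q ^+ d.
Proof.
move=> d_gt0 kq_ge1.
rewrite natrM natrX mulrAC -exprMn (le_trans (exprn_ege1 d kq_ge1)) //.
by rewrite ler_peMr ?ler1n // (le_trans ler01) // exprn_ege1.
Qed.

Lemma expected_zero_edges_ge (R : realType) (d : nat) (d0 : measure_display)
    (Omega : measurableType d0) (P : probability Omega R) (tau : edge d -> Omega -> R)
    (rank : seq (vtx d) -> nat) (p : R) (n : nat) :
  (0 < d)%N -> iid_bernoulli P tau p -> 4 <= n%:R * p `^ d%:R^-1 ->
  let C := (8 * d.+1)%N%:R^-1 in let q := p `^ d%:R^-1 in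
  ((C * n%:R * q)%:E <= \int[P]_w ((nzero tau rank w (diag d n))%:R)%:E)%E /\
  ((C * q)%:E <= \int[P]_w (nu0 tau rank w (diag d n))%:E)%E.
Proof.
move=> d_gt0 iid nq_ge4 C q; rewrite -/q in nq_ge4.
have /andP [p_ge0 p_le1] := iid_bernoulli_range iid (origin d, Ordinal d_gt0).
have qd : q ^+ d = p by exact: powR_invn_expn.
have n_gt0 : (0 < n)%N.
  by rewrite lt0n; apply: contraTneq nq_ge4 => ->; rewrite mul0r; lra.
have q_gt0 : 0 < q.
  by rewrite lt_neqAle powR_ge0 andbT; apply: contraTneq nq_ge4 => <-; rewrite mulr0; lra.
have q_le1 : q <= 1 by rewrite -(ler_pXn2r d_gt0) ?nnegrE ?powR_ge0 // qd expr1n.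
have [k kq] := box_side_exists q_gt0 q_le1.
have mass : 1 <= (k ^ d * d)%N%:R * p by rewrite -qd box_mass_ge1 //; case/andP: kq.
have nb_bound := boxes_lower_bound kq nq_ge4.
split.
  apply: le_trans (expected_nzero_ge rank iid d_gt0 mass n); rewrite lee_fin.
  rewrite (_ : _ * _ * q = n%:R * q / 8 / d.+1%:R); last by rewrite /C natrM; field.
  apply: le_trans nb_bound; rewrite ler_pdivrMr ?ltr0n // ler_peMr ?ler1n //.
  by rewrite divr_ge0 // mulr_ge0 // ltW.
apply: le_trans (expected_nu0_ge rank iid d_gt0 mass n); rewrite lee_fin.
rewrite (_ : _ * q = n%:R * q / 8 / (d.+1 * n)%N%:R); last first.
  by rewrite /C !natrM; field; rewrite pnatr_eq0 -lt0n n_gt0 addrC natr1 pnatr_eq0.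
by rewrite ler_pM2r // invr_gt0 ltr0n muln_gt0.
Qed.

Theorem proposition2p6 (R : realType) (d : nat) (rank : seq (vtx d) -> nat) :
  (2 <= d)%N -> injective rank ->
  forall p0 : R, p0 < p_c R d ->
  exists C : R, 0 < C /\
  forall p : R, p < p0 ->
    (exists N : nat,
       forall (d0 : measure_display) (Omega : measurableType d0)
              (P : probability Omega R) (tau : edge d -> Omega -> R),
       iid_bernoulli P tau p ->
       forall n : nat, (N <= n)%N ->
       ((C * n%:R * p `^ (d%:R)^-1)%:E
          <= \int[P]_w ((nzero tau rank w (diag d n))%:R)%:E)%E)
    /\
    (exists N' : nat,
       forall (d0 : measure_display) (Omega : measurableType d0)
              (P : probability Omega R) (tau : edge d -> Omega -> R),
       iid_bernoulli P tau p ->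
       forall n : nat, (N' <= n)%N ->
       ((C * p `^ (d%:R)^-1)%:E
          <= \int[P]_w (nu0 tau rank w (diag d n))%:E)%E).
Proof.
move=> d_ge2 _ p0 _; have d_gt0 : (0 < d)%N by lia.
exists (8 * d.+1)%N%:R^-1; split => [|p _]; first by rewrite invr_gt0 ltr0n.
set q := p `^ d%:R^-1.
have [q0|q_gt0] : q = 0 \/ 0 < q.
  by have := powR_ge0 p d%:R^-1; rewrite le_eqVlt => /predU1P [/esym|]; [left|right].
  rewrite q0; split; exists 0%N => d0 Omega P tau _ n _; rewrite mulr0.
    by apply: integral_ge0 => w _; rewrite lee_fin.
  by apply: integral_ge0 => w _; rewrite lee_fin /nu0 divr_ge0.
have [N nq_ge4] : exists N : nat, forall n, (N <= n)%N -> 4 <= n%:R * q.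
  exists (Num.truncn (4 / q)).+1 => n le_Nn.
  by rewrite -ler_pdivrMr // (le_trans (ltW (truncnS_gt _))) // ler_nat.
split; exists N => d0 Omega P tau iid n /nq_ge4 nq_n;
  by case: (expected_zero_edges_ge rank d_gt0 iid nq_n).
Qed.
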